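(* Let $\mathcal{X},\mathcal{Y}$ be finite, $p(X,Y)$ with $p(X)$ of full support, and $q(T|X)\in C(\mathcal{X},\mathcal{T})$. Then (i) $q_{\pi_{\mathcal{X}}}(Y,T)=q(Y,T)$, in particular $I_{q_{\pi_{\mathcal{X}}}}(Y;T)=I_q(Y;T)$; (ii) $I_{q_{\pi_{\mathcal{X}}}}(X;T)\le I_q(X;T)$, with equality if and only if $q_{\pi_{\mathcal{X}}}(T|X)=q(T|X)$.
   Context: $\mathcal{T}=\mathbb{N}$. The relation $x\sim_{\mathcal{X}}x'\iff p(Y|x)=p(Y|x')$ has partition $\{\mathcal{X}_j\}_j$ and projection $\pi_{\mathcal{X}}$. $q_{\pi_{\mathcal{X}}}(t|x):=\sum_j\delta_{x\in\mathcal{X}_j}\frac{\sum_{x'\in\mathcal{X}_j}q(t|x')p(x')}{p(\mathcal{X}_j)}$. For any channel $r(T|X)$, joints are $r(x,y,t)=p(x,y)r(t|x)$ and mutual informations are computed from them. *)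

From HB Require Import structures.
From mathcomp Require Import all_boot all_order all_algebra.
From mathcomp Require Import all_classical all_reals all_analysis.
Set Implicit Arguments. Unset Strict Implicit. Unset Printing Implicit Defensive.
Import Order.TTheory GRing.Theory Num.Theory.
Local Open Scope ring_scope.

Section Defs.
Variables (R : realType) (X Y : finType).

Definition is_joint_dist (p : X -> Y -> R) : Prop :=
  (forall x y, 0 <= p x y) /\ \sum_(x : X) \sum_(y : Y) p x y = 1.

Definition margX (p : X -> Y -> R) (x : X) : R := \sum_(y : Y) p x y.
Definition margY (p : X -> Y -> R) (y : Y) : R := \sum_(x : X) p x y.

Definition is_channel (r : X -> nat -> R) : Prop :=
  (forall x t, 0 <= r x t) /\
  (forall x, (\sum_(0 <= t <oo) (r x t)%:E)%E = 1%E).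

Definition simX (p : X -> Y -> R) (x x' : X) : bool :=
  [forall y, p x y / margX p x == p x' y / margX p x'].

Definition qpi (p : X -> Y -> R) (q : X -> nat -> R) (x : X) (t : nat) : R :=
  (\sum_(x' | simX p x x') q x' t * margX p x') /
  (\sum_(x' | simX p x x') margX p x').

Definition jointXT (p : X -> Y -> R) (r : X -> nat -> R) (x : X) (t : nat) : R :=
  margX p x * r x t.
Definition jointYT (p : X -> Y -> R) (r : X -> nat -> R) (y : Y) (t : nat) : R :=
  \sum_(x : X) p x y * r x t.

End Defs.

(* Mutual information I(A;T) of a joint j(a,t) on A x nat, whose A-marginal
   is pa (finite sum), with convention 0 log 0 = 0; natural logarithm. *)
Definition MI (R : realType) (A : finType) (pa : A -> R) (j : A -> nat -> R)
  : \bar R :=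
  (\sum_(0 <= t <oo)
     (\sum_(a : A) (if j a t == 0 then 0
                    else j a t * ln (j a t / (pa a * \sum_(a' : A) j a' t))))%:E)%E.

(* Averaging q(t|.) over a class of ~ with weights p(x') does not change the
   sum over x of p(x) f(x) q(t|x) for any class-invariant f.  Taking
   f(x) = p(y|x) gives (i), and f = 1 shows that q and q_pi have the same
   T-marginal q(t).  For (ii), write
   I_r(X;T) = sum_t sum_x p(x) r(t|x) ln (r(t|x)/q(t)); since ln (q_pi(t|x)/q(t))
   is class-invariant, the t-th summand of I_q - I_{q_pi} is
   sum_x p(x) [q ln (q/q_pi) - (q - q_pi)](t|x), a sum of nonnegative terms
   vanishing only where q = q_pi, by ln z <= z - 1.  As I_q(X;T) <= H(X) is
   finite, equality of the two series forces equality of every summand. *)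
From HB Require Import structures.
From mathcomp Require Import all_boot all_order all_algebra.
From mathcomp Require Import all_classical all_reals all_analysis.
From mathcomp Require Import ring.
Set Implicit Arguments. Unset Strict Implicit. Unset Printing Implicit Defensive.
Import Order.TTheory GRing.Theory Num.Theory.
Local Open Scope ring_scope.

Section KLGap.
Variable R : realType.

Lemma ln_le_subr1 (z : R) : 0 < z -> ln z <= z - 1.
Proof.
by move=> z0; rewrite lerBrDl -[z in _ <= z](lnK z0) expR_ge1Dx.
Qed.

Lemma ln_lt_subr1 (z : R) : 0 < z -> z != 1 -> ln z < z - 1.
Proof.
move=> z0 z1; rewrite ltrBrDl -[z in _ < z](lnK z0) expR_gt1Dx //.
by rewrite ln_eq0.
Qed.

(* The summand u ln (u/m) - (u - m) of a generalized KL divergence; the scale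
   c lets it be used where only ln (u/c) and ln (m/c) are meaningful. *)
Definition kl_gap (u m c : R) := u * (ln (u / c) - ln (m / c)) - (u - m).

Lemma kl_gapE (u m c : R) : 0 < u -> 0 < m -> 0 < c ->
  kl_gap u m c = u * (m / u - 1 - ln (m / u)).
Proof.
move=> u0 m0 c0; rewrite /kl_gap !ln_div ?posrE //.
by field; rewrite gt_eqF.
Qed.

Section NonnegArgs.
Variables u m c : R.
Hypotheses (u0 : 0 <= u) (m0 : 0 <= m) (mu : m = 0 -> u = 0) (uc : 0 < u -> 0 < c).

Let pos_case : u != 0 -> [/\ 0 < u, 0 < m & 0 < c].
Proof.
move=> nu; have up : 0 < u by rewrite lt0r nu.
split=> //; last exact: uc.
by rewrite lt0r m0 andbT; apply: contra nu => /eqP/mu ->.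
Qed.

Lemma kl_gap_ge0 : 0 <= kl_gap u m c.
Proof.
have [->|/pos_case[up mp cp]] := eqVneq u 0; first by rewrite /kl_gap !mul0r !sub0r opprK.
by rewrite kl_gapE // mulr_ge0 // subr_ge0 ln_le_subr1 // divr_gt0.
Qed.

Lemma kl_gap_eq0 : kl_gap u m c = 0 -> u = m.
Proof.
have [-> e|/pos_case[up mp cp]] := eqVneq u 0.
  by move: e; rewrite /kl_gap !mul0r !sub0r opprK.
rewrite kl_gapE // => /eqP; rewrite mulf_eq0 (gt_eqF up) /= subr_eq0 => /eqP e.
have [/divr1_eq //|mu1] := eqVneq (m / u) 1.
by move: (ln_lt_subr1 (divr_gt0 mp up) mu1); rewrite -e ltxx.
Qed.

End NonnegArgs.

Lemma nneseries_le_eq (a b : nat -> R) :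
  (forall t, 0 <= a t) -> (forall t, a t <= b t) ->
  (\sum_(0 <= t <oo) (b t)%:E < +oo)%E ->
  (\sum_(0 <= t <oo) (a t)%:E = \sum_(0 <= t <oo) (b t)%:E)%E ->
  forall t, a t = b t.
Proof.
move=> a0 ab bfin eqab t.
have d0 k : (0 <= (b k - a k)%:E)%E by rewrite lee_fin subr_ge0.
have split_b : (\sum_(0 <= k <oo) (b k)%:E =
    \sum_(0 <= k <oo) (a k)%:E + \sum_(0 <= k <oo) (b k - a k)%:E)%E.
  rewrite -nneseriesD; last 2 first.
  - by move=> k _ _; rewrite lee_fin.
  - by [].
  by apply: eq_eseriesr => k _; rewrite -EFinD addrC subrK.
have afin : (\sum_(0 <= k <oo) (a k)%:E)%E \is a fin_num.
  rewrite ge0_fin_numE; first by rewrite eqab.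
  by apply: nneseries_ge0 => k _ _; rewrite lee_fin.
have : (\sum_(0 <= k <oo) (b k - a k)%:E = 0)%E.
  set d := (\sum_(0 <= k <oo) (b k - a k)%:E)%E in split_b *.
  by rewrite -(addeK d afin) [(d + _)%E]addeC -split_b eqab subee // -eqab.
rewrite (nneseriesD1 (n := t)) // => /eqP; rewrite padde_eq0 //; last first.
  by apply: nneseries_ge0 => k _ _.
by case/andP => /eqP[/eqP]; rewrite subr_eq0 => /eqP.
Qed.

End KLGap.

Section Classes.
Variables (R : realType) (X Y : finType) (p : X -> Y -> R).

Local Notation sim := (simX p).

Lemma simX_refl x : sim x x.
Proof. exact/forallP. Qed.

Lemma simX_sym x x' : sim x x' = sim x' x.
Proof. by apply/forallP/forallP => h y; move/eqP: (h y) => ->. Qed.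

Lemma simX_trans x x' x'' : sim x x' -> sim x' x'' -> sim x x''.
Proof.
by move=> /forallP h1 /forallP h2; apply/forallP => y; move/eqP: (h1 y) => ->.
Qed.

Lemma simX_eql x x' : sim x x' -> sim x =1 sim x'.
Proof.
move=> h z; apply/idP/idP; last exact: simX_trans.
by apply: simX_trans; rewrite simX_sym.
Qed.

Lemma qpi_simX (q : X -> nat -> R) x x' t : sim x x' -> qpi p q x t = qpi p q x' t.
Proof. by move=> /simX_eql h; rewrite /qpi !(eq_bigl _ _ h). Qed.

End Classes.

Section Channel.
Variables (R : realType) (X Y : finType) (p : X -> Y -> R) (q : X -> nat -> R).
Hypothesis Hp : is_joint_dist p.
Hypothesis HP : forall x, 0 < margX p x.
Hypothesis Hq : is_channel q.

Local Notation P := (margX p).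
Local Notation sim := (simX p).
Local Notation mass x := (\sum_(x' | simX p x x') margX p x').
Local Notation Q := (qpi p q).

Lemma class_mass_gt0 x : 0 < mass x.
Proof.
rewrite (bigD1 x) ?simX_refl //=; apply: ltr_wpDr (HP x).
by apply: sumr_ge0 => i _; apply: ltW.
Qed.

(* Exchanging the sums over x and over its class x' turns the weight p(x)
   into the class mass, which cancels the normalization of qpi. *)
Lemma sum_qpi_class_invariant (f : X -> R) t :
  (forall x x', sim x x' -> f x = f x') ->
  \sum_x P x * f x * Q x t = \sum_x P x * f x * q x t.
Proof.
move=> hf.
transitivity (\sum_x \sum_(x' | sim x x') P x * f x * (q x' t * P x') / mass x).
  apply: eq_bigr => x _; rewrite /qpi mulrA mulr_sumr mulr_suml.
  by apply: eq_bigr => i _; rewrite mulrA.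
rewrite (exchange_big_dep predT) //=; apply: eq_bigr => x' _.
transitivity (\sum_(x | sim x x') P x * (f x' * (q x' t * P x') / mass x')).
  apply: eq_bigr => x h; rewrite (hf _ _ h) (eq_bigl _ _ (simX_eql h)).
  by rewrite !mulrA.
rewrite -mulr_suml (eq_bigl _ _ (fun z => simX_sym p z x')).
by field; rewrite gt_eqF ?class_mass_gt0.
Qed.

Lemma jointYT_qpi y t : jointYT p Q y t = jointYT p q y t.
Proof.
have condE (r : X -> nat -> R) :
    jointYT p r y t = \sum_x P x * (p x y / P x) * r x t.
  by apply: eq_bigr => x _; rewrite [P x * _]mulrC divfK ?gt_eqF.
by rewrite !condE; apply: sum_qpi_class_invariant => x x' /forallP /(_ y) /eqP.
Qed.

Definition margT t := \sum_x P x * q x t.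

Lemma margT_qpi t : \sum_x P x * Q x t = margT t.
Proof.
have := @sum_qpi_class_invariant (fun=> 1) t (fun _ _ _ => erefl).
by under eq_bigr do rewrite mulr1; under [in RHS]eq_bigr do rewrite mulr1.
Qed.

Lemma sum_margX : \sum_x P x = 1.
Proof. by case: Hp. Qed.

Lemma q_ge0 x t : 0 <= q x t.
Proof. by case: Hq. Qed.

Lemma qpi_ge0 x t : 0 <= Q x t.
Proof.
rewrite divr_ge0 // sumr_ge0 // => i _; last exact: ltW.
by rewrite mulr_ge0 ?q_ge0 ?ltW.
Qed.

Lemma qpi_eq0 x t : Q x t = 0 -> q x t = 0.
Proof.
move/eqP; rewrite mulf_eq0 invr_eq0 (gt_eqF (class_mass_gt0 x)) orbF => /eqP h.
have /eqP := psumr_eq0P (fun i _ => mulr_ge0 (q_ge0 i t) (ltW (HP i))) h (simX_refl p x).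
by rewrite mulf_eq0 (gt_eqF (HP x)) orbF => /eqP.
Qed.

Lemma le_margT (r : X -> nat -> R) x t : (forall x, 0 <= r x t) ->
  P x * r x t <= \sum_x P x * r x t.
Proof.
move=> r0; rewrite (bigD1 x) //= lerDl.
by apply: sumr_ge0 => i _; apply: mulr_ge0 (ltW (HP i)) (r0 i).
Qed.

Lemma margT_gt0 x t : 0 < q x t -> 0 < margT t.
Proof. by move=> qp; apply: lt_le_trans (le_margT x (q_ge0^~ t)); rewrite mulr_gt0. Qed.

Section SameMarginal.
Variable r : X -> nat -> R.
Hypothesis r_ge0 : forall x t, 0 <= r x t.
Hypothesis r_margT : forall t, \sum_x P x * r x t = margT t.

Definition mi_summand t := \sum_x P x * (r x t * ln (r x t / margT t)).

Lemma MI_jointXT : MI P (jointXT p r) = (\sum_(0 <= t <oo) (mi_summand t)%:E)%E.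
Proof.
apply: eq_eseriesr => t _; congr (_%:E); rewrite /jointXT r_margT.
apply: eq_bigr => x _; have Px : P x != 0 by rewrite gt_eqF.
case: ifP => [/eqP/eqP|_]; last by rewrite -mulf_div divff // mul1r mulrA.
by rewrite mulf_eq0 (negbTE Px) => /eqP ->; rewrite !(mulr0, mul0r).
Qed.

(* Gibbs' inequality against the product p(x) q(t), whose x-sum is that of r. *)
Lemma mi_summand_ge0 t : 0 <= mi_summand t.
Proof.
have J0 : 0 <= margT t.
  by rewrite -r_margT sumr_ge0 // => i _; apply: mulr_ge0 (ltW (HP i)) (r_ge0 i t).
have lnJJ : ln (margT t / margT t) = 0.
  have [->|nz] := eqVneq (margT t) 0; first by rewrite mul0r ln0.
  by rewrite divff // ln1.
have term x : P x * (r x t - margT t) <= P x * (r x t * ln (r x t / margT t)).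
  rewrite ler_pM2l // -subr_ge0; have le := le_margT x (r_ge0^~ t).
  rewrite r_margT in le.
  have := @kl_gap_ge0 _ (r x t) (margT t) (margT t) (r_ge0 x t) J0.
  rewrite /kl_gap lnJJ subr0; apply=> [J00|rp]; last by apply: lt_le_trans le; rewrite mulr_gt0.
  by apply/eqP; rewrite eq_le r_ge0 andbT -(pmulr_rle0 _ (HP x)) -J00.
apply: le_trans (ler_sum _ (fun x _ => term x)).
by rewrite (eq_bigr _ (fun i _ => mulrBr _ _ _)) sumrB r_margT -mulr_suml sum_margX mul1r subrr.
Qed.

End SameMarginal.

Lemma mi_summand_gap t : mi_summand q t - mi_summand Q t =
  \sum_x P x * kl_gap (q x t) (Q x t) (margT t).
Proof.
have := @sum_qpi_class_invariant (fun x => ln (Q x t / margT t)) t.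
move=> /(_ (fun x x' h => congr1 (fun z => ln (z / margT t)) (qpi_simX q t h))) inv.
rewrite (eq_bigr (fun x => P x * (q x t * ln (q x t / margT t))
   - P x * ln (Q x t / margT t) * q x t - (P x * q x t - P x * Q x t))); last first.
  by move=> x _; rewrite /kl_gap; ring.
rewrite !sumrB -inv margT_qpi subrr subr0; congr (_ - _).
by apply: eq_bigr => x _; ring.
Qed.

Lemma kl_gap_qpi_ge0 x t : 0 <= kl_gap (q x t) (Q x t) (margT t).
Proof. exact/kl_gap_ge0/margT_gt0/qpi_eq0/qpi_ge0/q_ge0. Qed.

Lemma mi_summand_qpi_le t : mi_summand Q t <= mi_summand q t.
Proof.
rewrite -subr_ge0 mi_summand_gap sumr_ge0 // => x _.
by rewrite mulr_ge0 ?kl_gap_qpi_ge0 // ltW.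
Qed.

Lemma qpi_eq_of_mi_summand_eq t : mi_summand Q t = mi_summand q t ->
  forall x, Q x t = q x t.
Proof.
move=> /eqP; rewrite eq_sym -subr_eq0 mi_summand_gap => /eqP gap0 x.
have term_ge0 i : true -> 0 <= P i * kl_gap (q i t) (Q i t) (margT t).
  by move=> _; rewrite mulr_ge0 ?kl_gap_qpi_ge0 // ltW.
move: (@psumr_eq0P _ _ _ _ term_ge0 gap0 x isT) => /eqP.
rewrite mulf_eq0 (gt_eqF (HP x)) /= => /eqP.
by move/(kl_gap_eq0 (q_ge0 x t) (qpi_ge0 x t) (@qpi_eq0 x t) (@margT_gt0 x t)) ->.
Qed.

(* I_q(X;T) <= H(X): each summand is bounded since q(t|x)/q(t) <= 1/p(x). *)
Lemma mi_summand_le_entropy t :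
  mi_summand q t <= \sum_x (- (P x * ln (P x))) * q x t.
Proof.
apply: ler_sum => x _.
have [->|nz] := eqVneq (q x t) 0; first by rewrite !(mul0r, mulr0).
have qp : 0 < q x t by rewrite lt0r nz q_ge0.
have Jp := margT_gt0 qp.
have : ln (q x t / margT t) <= ln (P x)^-1.
  rewrite ler_ln ?posrE ?divr_gt0 ?invr_gt0 // ler_pdivrMr // mulrC.
  by rewrite ler_pdivlMr // mulrC le_margT // => y; apply: q_ge0.
rewrite lnV ?posrE // => h.
by rewrite mulNr -mulrN -mulrA ler_pM2l // mulrN -mulNr mulrC ler_pM2r.
Qed.

Lemma mi_summand_fin : (\sum_(0 <= t <oo) (mi_summand q t)%:E < +oo)%E.
Proof.
have H_ge0 x : 0 <= - (P x * ln (P x)).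
  rewrite oppr_ge0 pmulr_rle0 // ln_le0 // -sum_margX (bigD1 x) //= lerDl.
  by apply: sumr_ge0 => i _; apply: ltW.
apply: (le_lt_trans (y := (\sum_(0 <= t <oo)
    (\sum_x (- (P x * ln (P x))) * q x t)%:E)%E)).
  apply: lee_nneseries => [t _ _|t _]; rewrite lee_fin ?mi_summand_le_entropy //.
  exact: (mi_summand_ge0 q_ge0 (fun=> erefl)).
under eq_eseriesr do rewrite -sumEFin.
rewrite nneseries_sum; last by move=> x t _; rewrite lee_fin mulr_ge0 ?q_ge0.
under eq_bigr do (under eq_eseriesr do rewrite EFinM; rewrite nneseriesZl;
  [|by move=> t _; rewrite lee_fin q_ge0]).
by under eq_bigr do (case: Hq => _ ->; rewrite mule1); rewrite sumEFin ltry.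
Qed.

End Channel.

Theorem lemma4 (R : realType) (X Y : finType) (p : X -> Y -> R)
  (q : X -> nat -> R) :
  is_joint_dist p ->
  (forall x, 0 < margX p x) ->
  is_channel q ->
  ((forall y t, jointYT p (qpi p q) y t = jointYT p q y t) /\
   MI (margY p) (jointYT p (qpi p q)) = MI (margY p) (jointYT p q)) /\
  ((MI (margX p) (jointXT p (qpi p q)) <= MI (margX p) (jointXT p q))%E /\
   (MI (margX p) (jointXT p (qpi p q)) = MI (margX p) (jointXT p q) <->
    (forall x t, qpi p q x t = q x t))).
Proof.
move=> Hp HP Hq; have margT_qpi := margT_qpi q HP.
split.
  split; first exact: jointYT_qpi.
  by congr MI; apply/funext => y; apply/funext; apply: jointYT_qpi.
rewrite (MI_jointXT HP margT_qpi) (MI_jointXT HP (fun t => erefl)).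
have summand_le := mi_summand_qpi_le HP Hq.
have summand_ge0 := mi_summand_ge0 Hp HP (qpi_ge0 HP Hq) margT_qpi.
split; first by apply: lee_nneseries => t *; rewrite lee_fin.
split=> [eqMI x t|eqQ]; last first.
  by have -> : qpi p q = q by apply/funext => x; apply/funext.
apply: (qpi_eq_of_mi_summand_eq HP Hq).
exact: nneseries_le_eq summand_ge0 summand_le (mi_summand_fin Hp HP Hq) eqMI t.
Qed.
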